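(* Let $G$ be a finite group and $p$ a prime dividing $|G|$ such that $G$ has a normal cyclic Sylow $p$-subgroup $P$, and let $H$ be the unique subgroup of $P$ of order $p$. If $x\in G$ is such that the coset $Hx$ is not contained in the conjugacy class $x^G$ of $x$, then $x\in C_G(P)$.
   Context: $x^G=\{g^{-1}xg: g\in G\}$ is the conjugacy class of $x$, and $C_G(P)$ is the centralizer of $P$ in $G$. *)

From mathcomp Require Import all_boot all_fingroup all_solvable.

From mathcomp Require Import all_boot all_fingroup all_solvable.
Set Implicit Arguments. Unset Strict Implicit. Unset Printing Implicit Defensive.
Local Open Scope group_scope.

(* If x does not centralise P, some commutator w = [z, x^-1] with z in P is
   nontrivial.  As P is abelian and normalised by x, w^n x = x^(z^n), so the
   whole coset <w> x lies in x^G; and H, the unique subgroup of order p of the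
   cyclic p-group P, lies in the nontrivial subgroup <w>. *)

Lemma commgVr_mulr (gT : finGroupType) (a x : gT) : [~ a, x^-1] * x = x ^ a.
Proof. by rewrite /commg !conjgE invgK !mulgA mulgVK. Qed.

Lemma commgX_normal_abelian (gT : finGroupType) (A : {group gT}) (x z : gT) n :
  abelian A -> x \in 'N(A) -> z \in A -> [~ z, x] ^+ n = [~ z ^+ n, x].
Proof.
move=> abA nAx zA; have zxA : z ^ x \in A by rewrite memJ_norm.
rewrite /commg expgMn; last by apply: (centsP abA); rewrite ?groupV.
by rewrite expVgn conjXg.
Qed.

Lemma rcoset_cycle_commg_subclass (gT : finGroupType) (A : {group gT}) x z :
  abelian A -> x \in 'N(A) -> z \in A -> <[[~ z, x^-1]]> :* x \subset x ^: A.
Proof.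
move=> abA nAx zA; apply/subsetP => _ /rcosetP [_ /cycleP [n ->] ->].
rewrite (commgX_normal_abelian _ abA) ?groupV // commgVr_mulr.
by rewrite memJ_class ?groupX.
Qed.

Lemma prime_subgroup_sub_cyclic_pgroup (gT : finGroupType) (P H K : {group gT}) p :
  prime p -> cyclic P -> p.-group P -> H \subset P -> #|H| = p ->
  K \subset P -> K :!=: 1 -> H \subset K.
Proof.
move=> pr_p cycP pP sHP oH sKP ntK.
have [_ p_dv_K _] := pgroup_pdiv (pgroupS sKP pP) ntK.
have [y yK oy] := Cauchy pr_p p_dv_K.
have <- : <[y]> = H.
  by apply/eqP; rewrite (eq_subG_cyclic cycP) ?cycle_subG ?(subsetP sKP) // -orderE oy oH.
by rewrite cycle_subG.
Qed.

Lemma not_cent_commgV (gT : finGroupType) (P : {group gT}) x :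
  x \notin 'C(P) -> exists2 z, z \in P & [~ z, x^-1] != 1.
Proof.
move=> nCx; apply/exists_inP; apply: contraR nCx => /exists_inPn cPx.
rewrite -groupV; apply/centP => z zP.
by apply/commute_sym/commgP; move: (cPx z zP); rewrite negbK.
Qed.

Theorem lemma4p1 (gT : finGroupType) (G P H : {group gT}) (p : nat) (x : gT) :
  prime p -> (p %| #|G|)%N ->
  P \in 'Syl_p(G) -> P <| G -> cyclic P ->
  H \subset P -> #|H| = p ->
  x \in G -> ~~ (H :* x \subset x ^: G) ->
  x \in 'C_G(P).
Proof.
move=> pr_p _ sylP /andP [sPG nPG] cycP sHP oH xG.
apply: contraR; rewrite inE xG /= => /not_cent_commgV [z zP ntw].
have pP : p.-group P by move: sylP; rewrite inE => /pHall_pgroup.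
have nPx : x \in 'N(P) := subsetP nPG x xG.
have wP : [~ z, x^-1] \in P by rewrite groupM ?groupV ?memJ_norm ?groupV.
have sHw : H \subset <[[~ z, x^-1]]>.
  by apply: (prime_subgroup_sub_cyclic_pgroup pr_p cycP pP sHP oH);
    rewrite ?cycle_subG ?cycle_eq1.
apply: subset_trans (classS x sPG).
apply: subset_trans (rcoset_cycle_commg_subclass (cyclic_abelian cycP) nPx zP).
by rewrite rcosetS.
Qed.
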